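(* Let $G$ be a circle of circumference $1$, let $\mathbf{x}\in G^n$ be such that the agents are not on one semicircle, and let $i\in N$, $x_i'\in G$ be such that the agents in $\mathbf{x}'=(x_i',\mathbf{x}_{-i})$ are on one semicircle. Then $\mathrm{cost}(\mathrm{rc}(\mathbf{x}),x_i)\le\mathrm{cost}(\mathrm{lrm}(\mathbf{x}'),x_i)$.
   Context: $d(x,y)$ is the shorter-arc length; $\hat x$ the antipode of $x$; $\mathrm{cost}(P,x_i)=\mathbb{E}_{y\sim P}[d(x_i,y)]$. Agents are on one semicircle if all locations lie in some closed arc of length $1/2$. LRM: for a profile on one semicircle, fix a closed arc of minimal length containing all locations, with endpoints $l,r$; $\mathrm{lrm}$ returns $l$ w.p. $1/4$, $r$ w.p. $1/4$, and the midpoint of that arc w.p. $1/2$. RC: the antipodal points $\hat{x}_1,\dots,\hat{x}_n$ partition $G$ into arcs between cyclically consecutive antipodal points; $\mathrm{rc}$ returns the midpoint of each such arc with probability equal to its length. *)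

From Stdlib Require Export Reals Lra List Sorting.Sorted Sorting.Permutation.
Export ListNotations.
Open Scope R_scope.

(* The circle G of circumference 1 is R/Z: a point is represented by any
   real number, two reals denoting the same point iff they differ by an
   integer.  frac_part r = r - floor r lies in [0,1). *)

Definition cdist (x y : R) : R := Rmin (frac_part (x - y)) (frac_part (y - x)).

Definition antipode (x : R) : R := frac_part (x + 1/2).

(* Closed arc starting at l going counterclockwise (increasing direction)
   of length L (0 <= L <= 1). *)
Definition in_arc (l L p : R) : Prop := frac_part (p - l) <= L.

Definition on_one_semicircle (xs : list R) : Prop :=
  exists l, Forall (in_arc l (1/2)) xs.

Definition is_min_arc (xs : list R) (l L : R) : Prop :=
  0 <= L /\ Forall (in_arc l L) xs /\
  (forall l' L', 0 <= L' -> Forall (in_arc l' L') xs -> L <= L').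

(* cost(lrm(x), y) for the chosen minimal arc [l, l+L]:
   l w.p. 1/4, r = l+L w.p. 1/4, midpoint l+L/2 w.p. 1/2. *)
Definition lrm_cost (l L y : R) : R :=
  1/4 * cdist l y + 1/4 * cdist (l + L) y + 1/2 * cdist (l + L / 2) y.

Fixpoint rc_chain (a : R) (rest : list R) (first y : R) : R :=
  match rest with
  | nil => (first + 1 - a) * cdist ((a + (first + 1)) / 2) y
  | b :: t => (b - a) * cdist ((a + b) / 2) y + rc_chain b t first y
  end.

(* cost(rc(x), y), where s is the sorted list of antipodal points. *)
Definition rc_cost_sorted (s : list R) (y : R) : R :=
  match s with
  | nil => 0
  | a :: t => rc_chain a t a y
  end.

Definition sorted_antipodes (xs s : list R) : Prop :=
  Sorted Rle s /\ Permutation s (map antipode xs).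

Definition upd (xs : list R) (i : nat) (v : R) : list R :=
  firstn i xs ++ v :: skipn (S i) xs.

From Stdlib Require Import Reals List.
From Stdlib Require Import Lra Psatz ZArith.
Open Scope R_scope.

(* Proof idea.  Write y = x_i and p for the antipode of y.  Both costs are
   compared with 1/4, the mean distance from y to a uniform point of G.

   RC side: rc(x) picks the midpoint of each arc between consecutive
   antipodal points with probability equal to the arc length, i.e. it is a
   midpoint rule for the integral of z |-> d(z, y) over G, which equals 1/4.
   Since p is itself one of the antipodal points, every arc avoids the only
   point where d(., y) fails to be convex, so the midpoint rule underestimates
   each piece of the integral; hence cost(rc(x), y) <= 1/4.  Concretely, the
   integral is realised by an explicit primitive [Psi p] and the chain of arcs
   is bounded by telescoping.

   LRM side: if the minimal arc [l, l+L] of x' (L <= 1/2) contains p, then its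
   two endpoints and midpoint are at average distance >= 1/4 from y.  The arc
   does contain p: otherwise [l, l+L] together with y fits in a semicircle, and
   so would every location of x, contradicting the hypothesis on x. *)

Lemma frac_part_unique (r f : R) (k : Z) :
  0 <= f < 1 -> r - f = IZR k -> frac_part r = f.
Proof.
  intros Hf Hk.
  assert (Hup : (k + 1)%Z = up r) by (apply tech_up; rewrite plus_IZR; lra).
  unfold frac_part, Int_part. rewrite <- Hup.
  replace (k + 1 - 1)%Z with k by ring. lra.
Qed.

Lemma frac_part_spec (r : R) :
  0 <= frac_part r < 1 /\ r - frac_part r = IZR (Int_part r).
Proof. destruct (base_fp r). split; [lra | unfold frac_part; ring]. Qed.

Lemma cdist_of_representative (a b c : R) (k : Z) :
  a - b = c + IZR k -> -1/2 <= c <= 1/2 -> cdist a b = Rabs c.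
Proof.
  intros Hc Hrange. unfold cdist.
  destruct (Rlt_le_dec 0 c) as [Hpos | Hnpos].
  - rewrite (frac_part_unique (a - b) c k) by lra.
    rewrite (frac_part_unique (b - a) (1 - c) (- k - 1))
      by (try rewrite minus_IZR, opp_IZR; lra).
    rewrite Rabs_right by lra. unfold Rmin; destruct Rle_dec; lra.
  - destruct (Req_dec c 0) as [-> | Hnz].
    + rewrite (frac_part_unique (a - b) 0 k) by lra.
      rewrite (frac_part_unique (b - a) 0 (- k)) by (try rewrite opp_IZR; lra).
      rewrite Rabs_R0. unfold Rmin; destruct Rle_dec; lra.
    + rewrite (frac_part_unique (a - b) (c + 1) (k - 1)) by (try rewrite minus_IZR; lra).
      rewrite (frac_part_unique (b - a) (- c) (- k)) by (try rewrite opp_IZR; lra).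
      rewrite Rabs_left by lra. unfold Rmin; destruct Rle_dec; lra.
Qed.

(* Midpoint rule for the convex function |t|: its integral over [a, b],
   namely (b|b| - a|a|)/2, dominates (b - a) |(a + b)/2|. *)
Lemma midpoint_rule_abs (a b : R) :
  a <= b -> (b - a) * Rabs ((a + b) / 2) <= (b * Rabs b - a * Rabs a) / 2.
Proof. intros Hab. split_Rabs; nra. Qed.

(* [Phi c] is a primitive of |z - c|.  [Psi p] is a primitive on [p-1, p+1]
   of z |-> d(z, p - 1/2): the distance is |z - (p - 1/2)| left of the
   antipode p and |z - (p + 1/2)| right of it; the constant 1/4 makes
   [Psi p] continuous at p. *)
Definition Phi (c z : R) : R := (z - c) * Rabs (z - c) / 2.

Definition Psi (p z : R) : R :=
  if Rle_dec z p then Phi (p - 1/2) z else Phi (p + 1/2) z + 1/4.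

Lemma Psi_left (p z : R) : z <= p -> Psi p z = Phi (p - 1/2) z.
Proof. intros Hz; unfold Psi; destruct Rle_dec; lra. Qed.

Lemma Psi_right (p z : R) : p <= z -> Psi p z = Phi (p + 1/2) z + 1/4.
Proof.
  intros Hz; unfold Psi; destruct Rle_dec as [Hle | Hgt]; [|reflexivity].
  replace z with p by lra. unfold Phi.
  replace (p - (p - 1/2)) with (1/2) by lra.
  replace (p - (p + 1/2)) with (- (1/2)) by lra.
  rewrite Rabs_Ropp, Rabs_right by lra. lra.
Qed.

Lemma arc_contribution_le (p y a b : R) (k : Z) :
  y = p - 1/2 + IZR k -> a <= b ->
  (p - 1 <= a /\ b <= p) \/ (p <= a /\ b <= p + 1) ->
  (b - a) * cdist ((a + b) / 2) y <= Psi p b - Psi p a.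
Proof.
  intros Hy Hab [[Ha Hb] | [Ha Hb]].
  - rewrite (cdist_of_representative _ _ ((a + b) / 2 - (p - 1/2)) (- k))
      by (try rewrite opp_IZR; lra).
    rewrite !Psi_left by lra. unfold Phi.
    pose proof (midpoint_rule_abs (a - (p - 1/2)) (b - (p - 1/2)) ltac:(lra)).
    replace ((a + b) / 2 - (p - 1/2)) with ((a - (p - 1/2) + (b - (p - 1/2))) / 2) by lra.
    lra.
  - rewrite (cdist_of_representative _ _ ((a + b) / 2 - (p + 1/2)) (1 - k))
      by (try rewrite minus_IZR; lra).
    rewrite !Psi_right by lra. unfold Phi.
    pose proof (midpoint_rule_abs (a - (p + 1/2)) (b - (p + 1/2)) ltac:(lra)).
    replace ((a + b) / 2 - (p + 1/2)) with ((a - (p + 1/2) + (b - (p + 1/2))) / 2) by lra.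
    lra.
Qed.

(* Telescoping along the sorted chain a :: rest, closed by the wrap-around arc
   to first + 1.  Invariant: either the antipode p is still a point of the
   remaining chain, or the chain has already passed it. *)
Lemma chain_contribution_le (p y first : R) (k : Z) :
  y = p - 1/2 + IZR k -> 0 <= p < 1 -> 0 <= first <= p ->
  forall rest a,
  StronglySorted Rle (a :: rest) ->
  Forall (fun z => 0 <= z < 1) (a :: rest) ->
  In p (a :: rest) \/ p <= a ->
  rc_chain a rest first y <= Psi p (first + 1) - Psi p a.
Proof.
  intros Hy Hp Hfirst rest. induction rest as [|b t IH]; intros a Hsorted Hrange Hp_ahead.
  - pose proof (Forall_inv Hrange) as Ha.
    assert (p <= a) by (destruct Hp_ahead as [[-> | []] |]; lra).
    apply arc_contribution_le with k; auto; lra.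
  - simpl.
    destruct (StronglySorted_inv Hsorted) as [Hsorted' Ha_le].
    pose proof (Forall_inv Ha_le) as Hab; simpl in Hab.
    pose proof (Forall_inv Hrange) as Ha.
    pose proof (Forall_inv_tail Hrange) as Hrange'.
    pose proof (Forall_inv Hrange') as Hb.
    assert (Hp_b : p <= a \/ In p (b :: t))
      by (destruct Hp_ahead as [[-> |] |]; auto; lra).
    assert (Htail : rc_chain b t first y <= Psi p (first + 1) - Psi p b).
    { apply IH; auto. destruct Hp_b; auto. right; lra. }
    assert (Hhead : (b - a) * cdist ((a + b) / 2) y <= Psi p b - Psi p a).
    { apply arc_contribution_le with k; auto.
      destruct Hp_b as [Hpa | Hin]; [right; lra | left].
      assert (b <= p).
      { destruct Hin as [-> | Hin]; [lra |].
        destruct (StronglySorted_inv Hsorted') as [_ Hbt].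
        exact (proj1 (Forall_forall _ _) Hbt p Hin). }
      lra. }
    lra.
Qed.

Lemma rc_cost_le_quarter (xs s : list R) (y : R) :
  sorted_antipodes xs s -> In y xs -> rc_cost_sorted s y <= 1/4.
Proof.
  intros [Hsorted Hperm] Hy.
  set (p := antipode y).
  assert (Hrange : Forall (fun z => 0 <= z < 1) s).
  { apply Forall_forall. intros z Hz.
    apply (Permutation_in _ Hperm), in_map_iff in Hz as [w [<- _]].
    apply frac_part_spec. }
  assert (Hin : In p s)
    by (apply (Permutation_in _ (Permutation_sym Hperm)), in_map, Hy).
  apply Sorted_StronglySorted in Hsorted; [| intros u v w; lra].
  destruct s as [|a t]; [destruct Hin |].
  destruct (frac_part_spec (y + 1/2)) as [Hp Hk].
  assert (Hyp : y = p - 1/2 + IZR (Int_part (y + 1/2))) by (unfold p, antipode; lra).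
  assert (Ha : a <= p).
  { destruct Hin as [-> | Hin]; [lra |].
    destruct (StronglySorted_inv Hsorted) as [_ Hat].
    exact (proj1 (Forall_forall _ _) Hat p Hin). }
  pose proof (Forall_inv Hrange) as Ha_range.
  eapply Rle_trans.
  - apply (chain_contribution_le p y a _ Hyp); auto; unfold p, antipode; lra.
  - rewrite Psi_right, Psi_left by lra. unfold Phi.
    replace (a + 1 - (p + 1/2)) with (a - (p - 1/2)) by lra. lra.
Qed.

Lemma cdist_along_arc (l L y w : R) :
  0 <= L <= 1/2 -> frac_part (y + 1/2 - l) <= L -> 0 <= w <= L ->
  cdist (l + w) y = 1/2 - Rabs (w - frac_part (y + 1/2 - l)).
Proof.
  intros HL Ht Hw.
  destruct (frac_part_spec (y + 1/2 - l)) as [Ht_range Hk].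
  set (t := frac_part (y + 1/2 - l)) in *.
  set (k := Int_part (y + 1/2 - l)) in *.
  destruct (Rle_dec t w).
  - rewrite (cdist_of_representative _ _ (w - t - 1/2) (1 - k))
      by (try rewrite minus_IZR; lra).
    split_Rabs; lra.
  - rewrite (cdist_of_representative _ _ (w - t + 1/2) (- k))
      by (try rewrite opp_IZR; lra).
    split_Rabs; lra.
Qed.

Lemma lrm_cost_ge_quarter (l L y : R) :
  0 <= L <= 1/2 -> frac_part (y + 1/2 - l) <= L -> 1/4 <= lrm_cost l L y.
Proof.
  intros HL Ht.
  destruct (frac_part_spec (y + 1/2 - l)) as [Ht_range _].
  unfold lrm_cost.
  rewrite <- (Rplus_0_r l) at 1.
  rewrite !(cdist_along_arc l L y) by lra.
  split_Rabs; lra.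
Qed.

Lemma arc_avoiding_antipode_in_semicircle (l L y : R) :
  0 <= L <= 1/2 -> L < frac_part (y + 1/2 - l) ->
  exists m, in_arc m (1/2) y /\ forall z, in_arc l L z -> in_arc m (1/2) z.
Proof.
  intros HL Hout. unfold in_arc.
  destruct (frac_part_spec (y - l)) as [Hu Hku].
  set (u := frac_part (y - l)) in *.
  destruct (Rle_dec u (1/2)) as [Hu_small | Hu_large].
  - exists l. split; [fold u; lra | intros z Hz; lra].
  - exists y. split.
    + rewrite (frac_part_unique (y - y) 0 0); simpl; lra.
    + intros z Hz.
      destruct (frac_part_spec (z - l)) as [Hw Hkw].
      set (w := frac_part (z - l)) in *.
      assert (Hanti : frac_part (y + 1/2 - l) = u - 1/2).
      { apply (frac_part_unique _ _ (Int_part (y - l) + 1)); [lra |].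
        rewrite plus_IZR; lra. }
      rewrite (frac_part_unique (z - y) (w - u + 1)
                 (Int_part (z - l) - Int_part (y - l) - 1)); [lra | lra |].
      rewrite !minus_IZR. lra.
Qed.

Lemma in_upd_or_replaced (xs : list R) (i : nat) (v z : R) :
  In z xs -> z = nth i xs 0 \/ In z (upd xs i v).
Proof.
  revert i. induction xs as [|a xs IH]; intros i Hz; [destruct Hz |].
  destruct i as [|i]; destruct Hz as [-> | Hz].
  - left; reflexivity.
  - right; right; exact Hz.
  - right; left; reflexivity.
  - destruct (IH i Hz) as [-> | Hin]; [left; reflexivity | right; right; exact Hin].
Qed.

Lemma min_arc_contains_antipode (xs : list R) (i : nat) (v l L : R) :
  ~ on_one_semicircle xs -> 0 <= L <= 1/2 -> Forall (in_arc l L) (upd xs i v) ->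
  frac_part (nth i xs 0 + 1/2 - l) <= L.
Proof.
  intros Hnot HL Harc.
  destruct (Rle_dec (frac_part (nth i xs 0 + 1/2 - l)) L) as [| Hout]; [assumption |].
  exfalso. apply Hnot.
  destruct (arc_avoiding_antipode_in_semicircle l L (nth i xs 0) HL ltac:(lra))
    as [m [Hy Hsub]].
  exists m. apply Forall_forall. intros z Hz.
  destruct (in_upd_or_replaced xs i v z Hz) as [-> | Hin]; [exact Hy |].
  exact (Hsub z (proj1 (Forall_forall _ _) Harc z Hin)).
Qed.

Theorem mainTheorem14 (x : list R) (i : nat) (xi' : R) :
  (i < length x)%nat ->
  ~ on_one_semicircle x ->
  on_one_semicircle (upd x i xi') ->
  forall s : list R, sorted_antipodes x s ->
  forall l L : R, is_min_arc (upd x i xi') l L ->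
  rc_cost_sorted s (nth i x 0) <= lrm_cost l L (nth i x 0).
Proof.
  intros Hi Hnot [l0 Hsemi] s Hs l L [HL0 [Harc Hmin]].
  assert (HL : 0 <= L <= 1/2) by (split; [| apply (Hmin l0)]; auto; lra).
  apply Rle_trans with (1/4).
  - exact (rc_cost_le_quarter x s _ Hs (nth_In x 0 Hi)).
  - apply lrm_cost_ge_quarter; [exact HL |].
    exact (min_arc_contains_antipode x i xi' l L Hnot HL Harc).
Qed.
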